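(* Let $u$ be a one-sided Sturmian sequence with left special sequence $l=l_1l_2\dots$, and let $xl_1l_2\dots l_{n-1}$ ($x\in\{0,1\}$) be a significant block of $\tilde X_u$. In the HB diagram of $X_u^+$, two arrows leave $xl_1l_2\dots l_{n-1}$ if and only if $xl_1l_2\dots l_{n-1}$ is a right special block, equivalently if and only if $xl_1l_2\dots l_{n-1}=l_nl_{n-1}\dots l_2l_1$.
   Context: A sequence $u\in\{0,1\}^{\mathbb N}$ is Sturmian if for every $n\ge1$ exactly $n+1$ distinct blocks of length $n$ occur in $u$. $X_u^+$ is the closure of $\{\sigma^n u:n\in\mathbb N\}$, $\sigma$ the shift $(\sigma x)_i=x_{i+1}$, and $\tilde X_u=\{x\in\{0,1\}^{\mathbb Z}: x_px_{p+1}\dots\in X_u^+\ \forall p\}$; the languages of $u$, $X_u^+$, $\tilde X_u$ coincide. For each $n$ there is a unique block $L_n$ of length $n$ with $0L_n$ and $1L_n$ in the language; these are the prefixes $L_n=l_1\dots l_n$ of the left special sequence $l$. A block $v$ is right special if both $v0$ and $v1$ are in the language. For a block $a_{-n}\dots a_0$ in the language, $\mathrm{fol}(a_{-n}\dots a_0)=\{b_0b_1\dots\in X_u^+:\exists b\in\tilde X_u,\ b_{-n}\dots b_0=a_{-n}\dots a_0\}$. A block $a_{-n}\dots a_0$ ($n\ge1$) is significant if $\mathrm{fol}(a_{-n}\dots a_0)\subsetneq\mathrm{fol}(a_{-n+1}\dots a_0)$; $0$ and $1$ are also significant. $\mathrm{sig}(\cdot)$ is the longest significant suffix. The HB diagram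 has vertex set the significant blocks and an arrow $\alpha\to\beta$ iff there is a symbol $b$ with $\alpha b$ in the language and $\beta=\mathrm{sig}(\alpha b)$. *)

From Stdlib Require Import ZArith.
From mathcomp Require Import all_boot.
Set Implicit Arguments. Unset Strict Implicit. Unset Printing Implicit Defensive.

(* One-sided sequences over {0,1} = nat -> bool (false = 0, true = 1);
   two-sided sequences = Z -> bool; blocks = seq bool. *)

Definition in_lang (u : nat -> bool) (w : seq bool) : Prop :=
  exists i : nat, forall j : nat, (j < size w)%N -> u (i + j)%N = nth false w j.

Definition sturmian (u : nat -> bool) : Prop :=
  forall n : nat, (1 <= n)%N ->
    exists s : seq (seq bool), uniq s /\ size s = n.+1 /\
      forall w, (size w = n /\ in_lang u w) <-> w \in s.

(* X_u^+ : closure of the orbit {sigma^m u} in the product topology of {0,1}^N,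
   written out with the cylinder neighbourhood basis. *)
Definition Xplus (u : nat -> bool) (x : nat -> bool) : Prop :=
  forall n : nat, exists m : nat, forall i : nat, (i < n)%N -> u (m + i)%N = x i.

Definition Xtilde (u : nat -> bool) (x : Z -> bool) : Prop :=
  forall p : Z, Xplus u (fun i : nat => x (p + Z.of_nat i)%Z).

Definition fol (u : nat -> bool) (w : seq bool) (y : nat -> bool) : Prop :=
  Xplus u y /\
  exists b : Z -> bool, Xtilde u b /\
    (forall k : nat, (k < size w)%N ->
        b (Z.of_nat k - Z.of_nat (size w).-1)%Z = nth false w k) /\
    (forall i : nat, b (Z.of_nat i) = y i).

Definition significant (u : nat -> bool) (w : seq bool) : Prop :=
  in_lang u w /\
  (size w = 1%N \/
   ((2 <= size w)%N /\
    (forall y, fol u w y -> fol u (behead w) y) /\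
    (exists y, fol u (behead w) y /\ ~ fol u w y))).

Definition is_sig (u : nat -> bool) (w beta : seq bool) : Prop :=
  suffix beta w /\ significant u beta /\
  forall g, suffix g w -> significant u g -> (size g <= size beta)%N.

Definition HB_arrow (u : nat -> bool) (alpha beta : seq bool) : Prop :=
  significant u alpha /\ significant u beta /\
  exists b : bool, in_lang u (rcons alpha b) /\ is_sig u (rcons alpha b) beta.

Definition two_arrows_leave (u : nat -> bool) (alpha : seq bool) : Prop :=
  exists beta1 beta2, beta1 <> beta2 /\
    HB_arrow u alpha beta1 /\ HB_arrow u alpha beta2.

Definition right_special (u : nat -> bool) (v : seq bool) : Prop :=
  in_lang u (rcons v false) /\ in_lang u (rcons v true).

(* l is the left special sequence of u: each prefix L_n = l_1..l_n (l_i = l (i-1))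
   satisfies 0L_n, 1L_n in the language *)
Definition left_special_seq (u : nat -> bool) (l : nat -> bool) : Prop :=
  forall n : nat, in_lang u (false :: mkseq l n) /\ in_lang u (true :: mkseq l n).

From Stdlib Require Import Classical ClassicalEpsilon.
From mathcomp Require Import all_boot zify.
Set Implicit Arguments. Unset Strict Implicit. Unset Printing Implicit Defensive.

(* Two arrows leave a significant block alpha exactly when alpha is right
   special: the longest significant suffixes of alpha 0 and alpha 1 end with
   different letters, and sig is a function.  A Sturmian sequence has exactly
   one right special block of each length, since p(n+1) - p(n) = 1 counts them,
   and its language is closed under reversal; hence the unique right special
   block of length n is l_n ... l_1, the mirror image of the left special L_n.

   If a v b occurs but
   b rev(v) a does not, then v is a bispecial palindrome and b = ~a.  Following
   first returns to v shows that ~a v a must occur: otherwise an occurrence of v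
   preceded by ~a is followed by ~a, so its next occurrence is again preceded by
   ~a, and no later occurrence of v is ever preceded by a, although a v recurs.
   Recurrence itself holds because a sequence with a length having no right
   special factor is eventually periodic, which a Sturmian sequence is not. *)

Definition win (y : nat -> bool) i n := mkseq (fun j => y (i + j)) n.

Section Windows.
Variable y : nat -> bool.

Lemma size_win i n : size (win y i n) = n.
Proof. exact: size_mkseq. Qed.

Lemma nth_win i n j : j < n -> nth false (win y i n) j = y (i + j).
Proof. by move=> ltjn; rewrite /win nth_mkseq. Qed.

Lemma win_rcons i n : win y i n.+1 = rcons (win y i n) (y (i + n)).
Proof. by rewrite /win mkseqS. Qed.

Lemma win_cons i n : win y i n.+1 = y i :: win y i.+1 n.
Proof.
apply: (@eq_from_nth _ false); first by rewrite size_win /= size_win.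
rewrite size_win => -[|j] ltjn; first by rewrite nth_win // addn0.
by rewrite [LHS]nth_win // [RHS]/= nth_win // addSnnS.
Qed.

Lemma win_cat i n k : win y i (n + k) = win y i n ++ win y (i + n) k.
Proof.
apply: (@eq_from_nth _ false); first by rewrite size_cat !size_win.
move=> j; rewrite size_win => ltj; rewrite nth_win // nth_cat size_win.
case: ltnP => hj; first by rewrite nth_win.
by rewrite nth_win; [congr y | ]; lia.
Qed.

Lemma win_behead i n : win y i.+1 n = behead (rcons (win y i n) (y (i + n))).
Proof. by rewrite -win_rcons win_cons. Qed.

Lemma win_take i n : win y i n = take n (y i :: win y i.+1 n).
Proof. by rewrite -win_cons win_rcons -cats1 take_size_cat // size_win. Qed.

Lemma in_langE w : in_lang y w <-> exists i, win y i (size w) = w.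
Proof.
split=> [[i hi]|[i hi]]; exists i.
  apply: (@eq_from_nth _ false); first by rewrite size_win.
  by move=> j; rewrite size_win => hj; rewrite nth_win // hi.
by move=> j hj; rewrite -{1}hi nth_win.
Qed.

Lemma in_lang_win i n : in_lang y (win y i n).
Proof. by apply/in_langE; exists i; rewrite size_win. Qed.

Lemma in_lang_nil : in_lang y [::].
Proof. by exists 0. Qed.

Lemma in_lang_cat w1 w2 : in_lang y (w1 ++ w2) -> in_lang y w1 /\ in_lang y w2.
Proof.
case/in_langE=> i; rewrite size_cat win_cat => /eqP.
rewrite eqseq_cat ?size_win // => /andP[/eqP h1 /eqP h2].
by split; apply/in_langE; [exists i | exists (i + size w1)].
Qed.

Lemma in_lang_rcons w b : in_lang y (rcons w b) -> in_lang y w.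
Proof. by rewrite -cats1 => /in_lang_cat[]. Qed.

Lemma in_lang_cons b w : in_lang y (b :: w) -> in_lang y w.
Proof. by rewrite -cat1s => /in_lang_cat[]. Qed.

Lemma in_lang_drop k w : in_lang y w -> in_lang y (drop k w).
Proof. by rewrite -{1}(cat_take_drop k w) => /in_lang_cat[]. Qed.

Lemma in_lang_rcons_ex w : in_lang y w -> exists b, in_lang y (rcons w b).
Proof.
case/in_langE=> i hi; exists (y (i + size w)); apply/in_langE; exists i.
by rewrite size_rcons win_rcons hi.
Qed.

End Windows.

Lemma win_shift (y : nat -> bool) K i n : win (fun t => y (K + t)) i n = win y (K + i) n.
Proof. by apply: eq_mkseq => t; rewrite addnA. Qed.

Lemma forall_bool_neq (P : bool -> Prop) b1 b2 : b1 <> b2 -> P b1 -> P b2 -> forall b, P b.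
Proof. by case: b1; case: b2 => // _ h1 h2 []. Qed.

Lemma eq_negb_neq (a b : bool) : a <> b -> b = ~~ a.
Proof. by case: a; case: b. Qed.

Lemma right_special_neg y v b :
  in_lang y (rcons v b) -> in_lang y (rcons v (~~ b)) -> right_special y v.
Proof. by case: b; split. Qed.

Lemma right_special_win y i j n : win y i n = win y j n -> y (i + n) <> y (j + n) ->
  right_special y (win y i n).
Proof.
move=> eq_ij ne; have ext b : in_lang y (rcons (win y i n) b).
  apply: (forall_bool_neq (P := fun b => in_lang y (rcons (win y i n) b)) ne).
    by rewrite -win_rcons; apply: in_lang_win.
  by rewrite eq_ij -win_rcons; apply: in_lang_win.
by split.
Qed.

Definition in_langb y w : bool :=
  if excluded_middle_informative (in_lang y w) then true else false.

Lemma in_langbP y w : reflect (in_lang y w) (in_langb y w).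
Proof. by rewrite /in_langb; case: excluded_middle_informative => h; constructor. Qed.

Definition right_specialb y v := in_langb y (rcons v false) && in_langb y (rcons v true).

Lemma right_specialbP y v : reflect (right_special y v) (right_specialb y v).
Proof.
by apply: (iffP andP) => -[/in_langbP ext0 /in_langbP ext1]; split=> //; apply/in_langbP.
Qed.

Fixpoint words n : seq (seq bool) :=
  if n is n'.+1 then [seq rcons z b | z <- words n', b <- [:: false; true]] else [:: [::]].

Lemma mem_words n z : (z \in words n) = (size z == n).
Proof.
elim: n z => [|n IH] z; first by case: z.
apply/allpairsP/idP => [[[z' b] /= [h1 h2 ->]]|].
  by rewrite size_rcons eqSS -IH.
case/lastP: z => [//|z b]; rewrite size_rcons eqSS => hz.
by exists (z, b); rewrite /= IH hz; case: b.
Qed.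

Lemma uniq_words n : uniq (words n).
Proof.
elim: n => [//|n IH]; apply: (@allpairs_uniq _ _ _ (fun z (b : bool) => rcons z b)) => //.
by move=> [z1 b1] [z2 b2] _ _ /= /rcons_inj [-> ->].
Qed.

Lemma size_words n : size (words n) = 2 ^ n.
Proof.
elim: n => [//|n IH].
by rewrite (size_allpairs (fun z (b : bool) => rcons z b)) IH expnS mulnC.
Qed.

Definition factors y n := [seq z <- words n | in_langb y z].

Lemma mem_factors y n z : (z \in factors y n) = (size z == n) && in_langb y z.
Proof. by rewrite mem_filter mem_words andbC. Qed.

Lemma uniq_factors y n : uniq (factors y n).
Proof. exact/filter_uniq/uniq_words. Qed.

Lemma win_in_factors y i n : win y i n \in factors y n.
Proof. by rewrite mem_factors size_win eqxx; apply/in_langbP/in_lang_win. Qed.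

Lemma size_factors0 y : size (factors y 0) = 1.
Proof. by rewrite /factors /=; case: (in_langbP y [::]) => // -[]; apply: in_lang_nil. Qed.

Lemma count_extensions y z :
  in_langb y (rcons z false) + in_langb y (rcons z true) =
  in_langb y z + right_specialb y z.
Proof.
rewrite /right_specialb; case: (in_langbP y z) => z_in /=.
  have [b ext] := in_lang_rcons_ex z_in.
  case: (in_langbP y (rcons z false)); case: (in_langbP y (rcons z true)) => //= no1 no0.
  by case: b ext => ext; [case: no1 | case: no0].
case: (in_langbP y (rcons z false)) => [/in_lang_rcons//|_].
by case: (in_langbP y (rcons z true)) => [/in_lang_rcons//|_].
Qed.

Lemma size_factorsS y n :
  size (factors y n.+1) = size (factors y n) + count (right_specialb y) (factors y n).
Proof.
rewrite !size_filter count_filter /=; elim: (words n) => [//|z s IH] /=.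
have rs_in : right_specialb y z -> in_langb y z.
  by case/right_specialbP => /in_lang_rcons /in_langbP.
rewrite IH addnA (count_extensions y z).
by case: (right_specialb y z) rs_in => [/(_ isT) ->|_] /=; lia.
Qed.

Lemma size_factors_ge y N :
  (forall k, k < N -> has (right_specialb y) (factors y k)) -> N.+1 <= size (factors y N).
Proof.
elim: N => [|N IH] hasRS; first by rewrite size_factors0.
rewrite size_factorsS; have := IH (fun k lt_kN => hasRS k (ltnW lt_kN)).
by have := hasRS N (ltnSn N); rewrite has_count; lia.
Qed.

Lemma next_letter_det y k i j : ~~ has (right_specialb y) (factors y k) ->
  win y i k = win y j k -> y (i + k) = y (j + k).
Proof.
move=> noRS eq_ij; apply: NNPP => ne; case/hasP: noRS; exists (win y i k).
  exact: win_in_factors.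
exact/right_specialbP/(right_special_win eq_ij).
Qed.

Lemma eventually_periodic_of_no_right_special y k :
  ~~ has (right_specialb y) (factors y k) ->
  exists T P, 0 < P /\ forall a, T <= a -> y (a + P) = y a.
Proof.
move=> noRS.
have [i [j [lt_ij eq_ij]]] : exists i j, i < j /\ win y i k = win y j k.
  have : ~~ uniq [seq win y t k | t <- iota 0 (2 ^ k).+1].
    apply/negP => uniq_w; suff : (2 ^ k).+1 <= size (words k) by rewrite size_words ltnn.
    rewrite -[X in X <= _](size_iota 0) -(size_map (fun t => win y t k)).
    by apply: uniq_leq_size uniq_w _ => _ /mapP[t _ ->]; rewrite mem_words size_win.
  case/(uniqPn [::]) => i [j [lt_ij]]; rewrite size_map size_iota => lt_j.
  rewrite !(nth_map 0) ?size_iota ?nth_iota ?add0n; try lia.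
  by exists i, j.
have eq_shift t : win y (i + t) k = win y (j + t) k.
  elim: t => [|t IH]; first by rewrite !addn0.
  by rewrite !addnS !win_behead IH (next_letter_det noRS IH).
exists (i + k), (j - i); split=> [|a le_a]; first lia.
have := next_letter_det noRS (eq_shift (a - i - k)).
have -> : i + (a - i - k) + k = a by lia.
by have -> : j + (a - i - k) + k = a + (j - i) by lia.
Qed.

Definition first_return (y : nat -> bool) v i p :=
  [/\ 0 < p, win y (i + p) (size v) = v &
      forall q, 0 < q < p -> win y (i + q) (size v) <> v].

Lemma palindrome_overlap (y : nat -> bool) v i p : rev v = v ->
  win y i (size v) = v -> win y (i + p) (size v) = v -> 0 < p <= (size v).+1 ->
  y (i + p - 1) = y (i + size v).
Proof.
move=> v_pal occ_i occ_ip /andP[p_gt0 le_p].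
case: (ltngtP p (size v).+1) le_p => [lt_p _|//|-> _]; last by rewrite addnS subn1.
set m := size v in occ_i occ_ip lt_p *.
have -> : y (i + p - 1) = nth false v (p - 1) by rewrite -occ_i nth_win; [congr y | ]; lia.
have -> : y (i + m) = nth false v (m - p) by rewrite -occ_ip nth_win; [congr y | ]; lia.
by rewrite -{1}v_pal nth_rev /m; [congr nth | ]; lia.
Qed.

Lemma behead_rcons_eq_nseq (a : bool) v : behead (rcons v a) = v -> v = nseq (size v) a.
Proof.
move=> eq_v; apply/all_pred1P; elim: v eq_v => [//|x v IH] /=.
case: v IH => [|y v] IH /=; first by case=> ->; rewrite eqxx.
by case=> eq_yx eq_v; subst x; have /= /andP[-> ->] := IH eq_v.
Qed.

Section Sturmian.
Variable u : nat -> bool.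
Hypothesis u_sturmian : sturmian u.

Lemma size_factors_sturmian n : size (factors u n) = n.+1.
Proof.
case: n => [|n]; first exact: size_factors0.
have [s [uniq_s [<- mem_s]]] := u_sturmian (ltn0Sn n).
apply/perm_size/uniq_perm => [||z]; rewrite ?uniq_factors //.
rewrite mem_factors; apply/andP/idP => [[/eqP sz /in_langbP hz]|/mem_s[-> hz]].
  exact/mem_s.
by split; last apply/in_langbP.
Qed.

Lemma count_right_special n : count (right_specialb u) (factors u n) = 1.
Proof. by have := size_factorsS u n; rewrite !size_factors_sturmian; lia. Qed.

Lemma right_special_unique z1 z2 : size z1 = size z2 ->
  right_special u z1 -> right_special u z2 -> z1 = z2.
Proof.
move=> eq_size rs1 rs2; apply: NNPP => ne.
suff : 2 <= count (right_specialb u) (factors u (size z1)) by rewrite count_right_special.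
rewrite -size_filter -[2]/(size [:: z1; z2]); apply: uniq_leq_size.
  by rewrite /= inE andbT; apply/eqP.
have in_factors z : right_special u z -> z \in factors u (size z).
  by case=> /in_lang_rcons /in_langbP hz _; rewrite mem_factors eqxx.
move=> z; rewrite !inE mem_filter => /orP[] /eqP ->; apply/andP.
  by split; [apply/right_specialbP | exact: in_factors].
by rewrite eq_size; split; [apply/right_specialbP | exact: in_factors].
Qed.

Lemma sturmian_not_eventually_periodic T P : 0 < P ->
  ~ (forall a, T <= a -> u (a + P) = u a).
Proof.
move=> P_gt0 per.
have perM c a : T <= a -> u (a + c * P) = u a.
  elim: c a => [|c IH] a le_a; first by rewrite addn0.
  by rewrite mulSn addnA IH ?per //; lia.
have sub : {subset factors u (T + P) <= [seq win u q (T + P) | q <- iota 0 (T + P)]}.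
  move=> z; rewrite mem_factors => /andP[/eqP sz /in_langbP /in_langE]; rewrite sz => -[q <-].
  apply/mapP; case: (ltnP q (T + P)) => lt_q; first by exists q; rewrite ?mem_iota.
  exists (T + (q - T) %% P); first by rewrite mem_iota add0n ltn_add2l ltn_pmod.
  apply: eq_mkseq => x.
  have -> : q + x = T + (q - T) %% P + x + (q - T) %/ P * P by have := divn_eq (q - T) P; lia.
  by rewrite perM //; lia.
have := uniq_leq_size (uniq_factors u _) sub.
by rewrite size_map size_iota size_factors_sturmian ltnn.
Qed.

Lemma recurrent w K : in_lang u w -> exists2 i, K <= i & win u i (size w) = w.
Proof.
move=> hw; apply: NNPP => no_occ; pose v t := u (K + t).
have few_factors : size (factors v (size w)) <= size w.
  rewrite -ltnS -(size_factors_sturmian (size w)) -[_.+1]/(size (w :: _)).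
  apply: uniq_leq_size => [|z]; rewrite /= ?uniq_factors ?andbT.
    rewrite mem_factors negb_and; apply/orP; right; apply/negP => /in_langbP.
    by case/in_langE=> i; rewrite win_shift => occ; apply: no_occ; exists (K + i); first lia.
  rewrite inE !mem_factors => /orP[/eqP ->|/andP[-> /in_langbP /in_langE[i <-]]].
    by rewrite eqxx; apply/in_langbP.
  by rewrite win_shift; apply/in_langbP/in_lang_win.
have [k lt_k noRS] : exists2 k, k < size w & ~~ has (right_specialb v) (factors v k).
  apply: NNPP => allRS.
  suff : (size w).+1 <= size (factors v (size w)) by rewrite ltnNge few_factors.
  apply: size_factors_ge => k lt_k; apply: negbNE; apply/negP => noRS.
  by apply: allRS; exists k.
have [T [P [P_gt0 per]]] := eventually_periodic_of_no_right_special noRS.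
apply: (sturmian_not_eventually_periodic (T := K + T) P_gt0) => a le_a.
by have := per (a - K); rewrite /v addnA subnKC; [apply; lia | lia].
Qed.

Lemma left_extendable w : in_lang u w -> exists b, in_lang u (b :: w).
Proof.
case/(recurrent 1) => i le_i occ; exists (u i.-1); apply/in_langE; exists i.-1.
by rewrite /= win_cons prednK // occ.
Qed.

Section FirstReturn.
Variable v : seq bool.
Hypothesis v_rs : right_special u v.
Let m := size v.

Lemma first_return_ex i : exists p, first_return u v i p.
Proof.
have v_in : in_lang u v by case: v_rs => /in_lang_rcons.
have ex : exists p, (0 < p) && (win u (i + p) m == v).
  have [j le_j occ] := recurrent i.+1 v_in.
  by exists (j - i); rewrite subnKC ?occ ?eqxx //; lia.
case: (ex_minnP ex) => p /andP[p_gt0 /eqP occ] p_min.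
exists p; split=> // q /andP[q_gt0 lt_q] occ_q.
by have := p_min q; rewrite q_gt0 occ_q eqxx => /(_ isT); lia.
Qed.

Lemma win_agree_until x z D : win u x m = win u z m ->
  (forall d, d < D -> win u (x + d) m <> v) ->
  forall d, d <= D -> win u (x + d) m = win u (z + d) m.
Proof.
move=> eq_xz no_occ; elim=> [|d IH] le_d; first by rewrite !addn0.
have eq_d := IH (ltnW le_d).
have eq_next : u (x + d + m) = u (z + d + m).
  apply: NNPP => ne; apply: (no_occ d le_d).
  by apply: right_special_unique (right_special_win eq_d ne) v_rs; rewrite size_win.
by rewrite !addnS !win_behead eq_d eq_next.
Qed.

Lemma first_return_win_neq i p s t : win u i m = v -> first_return u v i p ->
  s < t < p -> win u (i + s) m <> win u (i + t) m.
Proof.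
move=> occ_i [p_gt0 occ_p p_min] /andP[lt_st lt_tp] eq_st.
case: (posnP s) => [s0|s_gt0].
  by apply: (p_min t); [lia | rewrite -eq_st s0 addn0].
have no_occ d : d < p - t -> win u (i + s + d) m <> v.
  by move=> lt_d; rewrite -addnA; apply: p_min; lia.
have := win_agree_until eq_st no_occ (leqnn _).
rewrite -!addnA subnKC ?(ltnW lt_tp) // occ_p => eq_v.
by apply: (p_min (s + (p - t))); [lia | exact: eq_v].
Qed.

End FirstReturn.

Section BispecialPalindrome.
Variables (v : seq bool) (a : bool).
Hypotheses (v_pal : rev v = v) (v_rs : right_special u v).
Hypothesis v_ls_unique :
  forall z, size z = size v -> (forall b, in_lang u (b :: z)) -> z = v.
Let m := size v.

Lemma occurrence_followed_by c : exists2 i, win u i m = v & u (i + m) = c.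
Proof.
have : in_lang u (rcons v c) by case: v_rs; case: c.
by case/in_langE=> i; rewrite size_rcons win_rcons => /rcons_inj[occ next]; exists i.
Qed.

(* A long return from an occurrence followed by ~a passes |v| + 1 distinct
   windows; the window after an occurrence followed by a would be one more
   factor of length |v|, unless it is v itself, which forces v = a^|v|. *)
Section LongReturn.
Variables (i p ia : nat).
Hypotheses (occ_i : win u i m = v) (next_i : u (i + m) = ~~ a).
Hypotheses (ret_i : first_return u v i p) (long_ret : m < p).
Hypotheses (occ_ia : win u ia m = v) (next_ia : u (ia + m) = a).

Lemma win_succ_neq_return_win t : 0 < m -> win u ia.+1 m <> v -> t <= m ->
  win u ia.+1 m <> win u (i + t) m.
Proof.
case: ret_i => p_gt0 _ p_min m_gt0 no_occ le_tm eq_t.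
case: (posnP t) => [t0|t_gt0]; first by apply: no_occ; rewrite eq_t t0 addn0.
have eq_prev : u ia = u (i + t - 1).
  apply: NNPP => ne; apply: no_occ; apply: v_ls_unique; first by rewrite size_win.
  apply: (forall_bool_neq (P := fun b => in_lang u (b :: win u ia.+1 m)) ne).
    by rewrite -win_cons; apply: in_lang_win.
  rewrite eq_t; set s := i + t - 1; have -> : i + t = s.+1 by rewrite /s; lia.
  by rewrite -win_cons; apply: in_lang_win.
have t1 : t = 1.
  apply: NNPP => ne; apply: (p_min (t - 1)); first lia.
  have -> : i + (t - 1) = i + t - 1 by lia.
  rewrite -/m -[RHS]occ_ia (win_take u ia) (win_take u (i + t - 1)) eq_t eq_prev.
  by have -> : (i + t - 1).+1 = i + t by lia.
have : nth false (win u ia.+1 m) m.-1 = nth false (win u (i + 1) m) m.-1 by rewrite eq_t t1.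
rewrite !nth_win ?prednK // addn1 !addSnnS prednK // next_ia next_i.
by case: (a).
Qed.

Lemma win_succ_occurrence : 0 < m -> win u ia.+1 m = v.
Proof.
move=> m_gt0; apply: NNPP => no_occ.
pose L := win u ia.+1 m :: [seq win u (i + t) m | t <- iota 0 m.+1].
suff : size L <= size (factors u m).
  by rewrite size_factors_sturmian /= size_map size_iota ltnn.
apply: uniq_leq_size => [|z]; last first.
  by rewrite inE => /orP[/eqP -> | /mapP[t _ ->]]; apply: win_in_factors.
rewrite /L cons_uniq map_inj_in_uniq ?iota_uniq ?andbT.
  apply/negP => /mapP[t]; rewrite mem_iota add0n ltnS => le_tm.
  exact: win_succ_neq_return_win.
move=> t1 t2; rewrite !mem_iota !add0n !ltnS => le_t1 le_t2 eq_t12.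
have ret_neq s t : s < t <= m -> win u (i + s) m <> win u (i + t) m.
  by move=> /andP[lt_st le_t]; apply: first_return_win_neq ret_i _ => //; lia.
by case: (ltngtP t1 t2) => [lt12|lt21|//]; exfalso;
  [apply: (ret_neq t1 t2) eq_t12 | apply: (ret_neq t2 t1) (esym eq_t12)]; lia.
Qed.

End LongReturn.

(* Short returns overlap, and the palindrome v reflects the letter after the
   first occurrence onto the letter before the second one. *)
Lemma first_return_prev_letter i p : win u i m = v -> u (i + m) = ~~ a ->
  first_return u v i p -> u (i + p - 1) = ~~ a.
Proof.
move=> occ_i next_i ret_i; have [p_gt0 occ_p p_min] := ret_i.
case: (leqP p m.+1) => [le_p|long_ret].
  by rewrite (palindrome_overlap v_pal occ_i occ_p) ?p_gt0.
have m_gt0 : 0 < m.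
  case: (posnP m) => // m0; case: (p_min 1); first lia.
  by move/eqP: m0; rewrite size_eq0 => /eqP ->.
have [ia occ_ia next_ia] := occurrence_followed_by a.
have v_const : v = nseq m a.
  apply: behead_rcons_eq_nseq.
  rewrite -{1}occ_ia -next_ia -win_behead.
  exact: (win_succ_occurrence occ_i next_i ret_i (ltnW long_ret) occ_ia next_ia).
apply: NNPP => prev_a.
have {}prev_a : u (i + p - 1) = a by move: prev_a; case: (u _); case: (a).
apply: (p_min (p - 1)); first lia.
have -> : i + (p - 1) = i + p - 1 by lia.
rewrite -/m win_take prev_a; have -> : (i + p - 1).+1 = i + p by lia.
by rewrite -/m occ_p v_const -[a :: _]/(nseq m.+1 a) take_nseq.
Qed.

Lemma prev_letter_persists j0 : ~ in_lang u (~~ a :: rcons v a) ->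
  u j0 = ~~ a -> win u j0.+1 m = v ->
  forall j, j0 < j -> win u j m = v -> u (j - 1) = ~~ a.
Proof.
move=> no_mixed prev_j0 occ_j0; elim/ltn_ind => j IH lt_j0j occ_j.
case: (eqVneq j j0.+1) => [->|ne]; first by rewrite subn1.
have ex : exists k, (j0 < k < j) && (win u k m == v).
  by exists j0.+1; rewrite ltnSn occ_j0 eqxx andbT /=; lia.
have bounded k : (j0 < k < j) && (win u k m == v) -> k <= j.
  by case/andP=> /andP[_ /ltnW].
have [j1 /andP[/andP[lt_j1 lt_j1j] /eqP occ_j1] j1_max] := ex_maxnP ex bounded.
have prev_j1 := IH j1 lt_j1j lt_j1 occ_j1.
have next_j1 : u (j1 + m) = ~~ a.
  apply: NNPP => next_a; apply: no_mixed; apply/in_langE; exists (j1 - 1).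
  rewrite /= size_rcons win_cons; have -> : (j1 - 1).+1 = j1 by lia.
  by rewrite win_rcons occ_j1 prev_j1; move: next_a; case: (u _); case: (a).
have [p ret_j1] := first_return_ex v_rs j1.
have [p_gt0 occ_p p_min] := ret_j1.
suff -> : j = j1 + p by apply: first_return_prev_letter.
apply/eqP; rewrite eqn_leq; apply/andP; split.
  rewrite leqNgt; apply/negP => lt_p; have := j1_max (j1 + p).
  by rewrite lt_p -/m occ_p eqxx andbT /= => /(_ _); lia.
rewrite leqNgt; apply/negP => lt_j1p.
by apply: (p_min (j - j1)); [lia | rewrite subnKC //; lia].
Qed.

Lemma mixed_extension : in_lang u (a :: v) -> in_lang u (~~ a :: v) ->
  in_lang u (~~ a :: rcons v a).
Proof.
move=> av nav; apply: NNPP => no_mixed.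
have [j0] : exists j0, win u j0 m.+1 = ~~ a :: v by case/in_langE: nav => j0; exists j0.
rewrite win_cons => -[prev_j0 occ_j0].
have [k le_k] := recurrent j0.+1 av.
rewrite /= win_cons => -[prev_k occ_k].
have := prev_letter_persists no_mixed prev_j0 occ_j0 (j := k.+1) (ltnW le_k) occ_k.
by rewrite subn1 /= prev_k; case: (a).
Qed.

End BispecialPalindrome.

Lemma rev_in_lang_step n : (forall z, size z <= n -> in_lang u z -> in_lang u (rev z)) ->
  forall a v b, size v < n -> in_lang u (a :: rcons v b) -> in_lang u (b :: rcons (rev v) a).
Proof.
move=> rev_in a v b lt_v w_in; apply: NNPP => no_rev.
have av : in_lang u (a :: v) by move: w_in; rewrite -rcons_cons => /in_lang_rcons.
have vb : in_lang u (rcons v b) := in_lang_cons w_in.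
have rv_a : in_lang u (rcons (rev v) a) by rewrite -rev_cons; exact: rev_in av.
have b_rv : in_lang u (b :: rev v).
  by rewrite -rev_rcons; apply: rev_in vb; rewrite size_rcons.
have [c b_rv_c] := in_lang_rcons_ex b_rv.
have {}b_rv_c : in_lang u (b :: rcons (rev v) (~~ a)).
  by have <- : c = ~~ a by apply: eq_negb_neq => ac; apply: no_rev; rewrite ac.
have [d d_rv_a] := left_extendable rv_a.
have {}d_rv_a : in_lang u (~~ b :: rcons (rev v) a).
  by have <- : d = ~~ b by apply: eq_negb_neq => bd; apply: no_rev; rewrite bd.
have v_rs : right_special u v.
  apply: (right_special_neg vb); rewrite -[v]revK -rev_cons; apply: rev_in.
    by rewrite /= size_rev; lia.
  by move: d_rv_a; rewrite -rcons_cons => /in_lang_rcons.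
have rv_rs : right_special u (rev v) := right_special_neg rv_a (in_lang_cons b_rv_c).
have v_pal : rev v = v by apply: right_special_unique; rewrite ?size_rev.
rewrite v_pal in no_rev b_rv_c.
have b_na : b = ~~ a by apply: eq_negb_neq => ab; apply: no_rev; move: w_in; rewrite -ab.
rewrite b_na in no_rev b_rv_c; apply/no_rev/mixed_extension => //.
  move=> z size_z z_ls; suff rz : rev z = v by rewrite -[z]revK rz v_pal.
  apply: right_special_unique => //; first by rewrite size_rev.
  by split; rewrite -rev_cons; apply: rev_in => //=; lia.
by move: b_rv_c; rewrite -rcons_cons => /in_lang_rcons.
Qed.

Lemma rev_in_lang w : in_lang u w -> in_lang u (rev w).
Proof.
suff rev_in n z : size z <= n -> in_lang u z -> in_lang u (rev z) by apply: rev_in.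
elim: n z => [|n IH] [|a z] //; case/lastP: z => [//|v b]; rewrite /= size_rcons => le_n.
by rewrite rev_cons rev_rcons; apply: (rev_in_lang_step IH).
Qed.

End Sturmian.

Section Significance.
Variable u : nat -> bool.

Definition significantb g : bool :=
  if excluded_middle_informative (significant u g) then true else false.

Lemma significantbP g : reflect (significant u g) (significantb g).
Proof. by rewrite /significantb; case: excluded_middle_informative => h; constructor. Qed.

Lemma significant_size_gt0 g : significant u g -> 0 < size g.
Proof. by case=> _ [->|[le_g _]] //; lia. Qed.

Lemma suffix_drop (w g : seq bool) : suffix g w -> g = drop (size w - size g) w.
Proof. by case/suffixP => s ->; rewrite size_cat addnK drop_size_cat. Qed.

Lemma is_sig_ex w : in_lang u w -> 0 < size w -> exists beta, is_sig u w beta.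
Proof.
move=> w_in w_gt0; pose P k := (k <= size w) && significantb (drop (size w - k) w).
have ex : exists k, P k.
  exists 1; rewrite /P w_gt0 /=; apply/significantbP; split; first exact: in_lang_drop.
  by left; rewrite size_drop; lia.
have bounded k : P k -> k <= size w by case/andP.
have [k /andP[le_k /significantbP sig_k] k_max] := ex_maxnP ex bounded.
exists (drop (size w - k) w); split; last split=> //.
  by apply/suffixP; exists (take (size w - k) w); rewrite cat_take_drop.
move=> g suf_g sig_g; rewrite size_drop.
have := k_max (size g); rewrite /P -(suffix_drop suf_g).
have -> : size g <= size w by case/suffixP: suf_g => s ->; rewrite size_cat leq_addl.
have -> : significantb g by apply/significantbP.
by move/(_ isT); lia.
Qed.

Lemma is_sig_unique w beta1 beta2 : is_sig u w beta1 -> is_sig u w beta2 -> beta1 = beta2.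
Proof.
move=> [suf1 [sig1 max1]] [suf2 [sig2 max2]].
rewrite (suffix_drop suf1) (suffix_drop suf2); congr (drop (_ - _) _).
by apply/eqP; rewrite eqn_leq max1 ?max2.
Qed.

Lemma is_sig_last w b beta d : is_sig u (rcons w b) beta -> last d beta = b.
Proof.
case=> /suffixP[s eq_w] [/significant_size_gt0 beta_gt0 _].
have := congr1 (last b) eq_w; rewrite last_rcons last_cat.
by case: beta beta_gt0 {eq_w} => //= x beta _ ->.
Qed.

Lemma two_arrows_leave_iff_right_special alpha : significant u alpha ->
  two_arrows_leave u alpha <-> right_special u alpha.
Proof.
move=> sig_alpha; split.
  move=> [beta1 [beta2 [ne [[_ [_ [b1 [ext1 sig1]]]] [_ [_ [b2 [ext2 sig2]]]]]]]].
  have nb : b1 <> b2 by move=> eq_b; apply: ne; apply: (is_sig_unique sig1); rewrite eq_b.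
  have ext b : in_lang u (rcons alpha b).
    exact: (forall_bool_neq (P := fun b => in_lang u (rcons alpha b)) nb).
  by split.
case=> ext0 ext1; have rcons_gt0 b : 0 < size (rcons alpha b) by rewrite size_rcons.
have [beta0 sig0] := is_sig_ex ext0 (rcons_gt0 false).
have [beta1 sig1] := is_sig_ex ext1 (rcons_gt0 true).
exists beta0, beta1; split.
  by move=> eq_beta; have := is_sig_last false sig0; rewrite eq_beta (is_sig_last false sig1).
have [_ [sig_beta0 _]] := sig0; have [_ [sig_beta1 _]] := sig1.
by split; do 2!split=> //; [exists false | exists true].
Qed.

End Significance.

Theorem lemma4p10 (u l : nat -> bool) (x : bool) (n : nat) :
  sturmian u -> left_special_seq u l -> (1 <= n)%N ->
  significant u (x :: mkseq l n.-1) ->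
  (two_arrows_leave u (x :: mkseq l n.-1) <-> right_special u (x :: mkseq l n.-1)) /\
  (right_special u (x :: mkseq l n.-1) <-> x :: mkseq l n.-1 = rev (mkseq l n)).
Proof.
move=> u_sturmian l_ls n_gt0 sig_alpha.
have rev_l_rs : right_special u (rev (mkseq l n)).
  by case: (l_ls n) => ls0 ls1; split; rewrite -rev_cons; apply: rev_in_lang.
split; first exact: two_arrows_leave_iff_right_special.
split=> [alpha_rs|->] //; apply: (right_special_unique u_sturmian) => //.
by rewrite size_rev /= !size_mkseq prednK.
Qed.
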